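(* Let $g_{ij}(x^k)$ be a (non-degenerate) metric on an $n$-dimensional manifold with coordinates $x^k$, and let $V_0(t,x^k)$, $V_1(t,x^k)$ be smooth functions. Consider the perturbed Lagrangian \[ L\left(t,x^{k},\dot{x}^{k},\varepsilon\right)=\frac{1}{2}g_{ij}\dot{x}^{i}\dot{x}^{j}-V_{0}(t,x^{k})-\varepsilon V_{1}(t,x^{k})+O(\varepsilon^{2}). \] Then every first-order approximate Noether point symmetry $X=X_0+\varepsilon X_1$, $X_A=\xi_A(t,x^k)\partial_t+\eta_A^i(t,x^k)\partial_i$ ($A=0,1$), of $L$ is generated from the homothetic algebra of $g_{ij}$: $\xi_0=\xi_0(t)$, $\xi_1=\xi_1(t)$, and the spatial parts $\eta_A^i(t,\cdot)$ (for each fixed $t$) are homothetic (or Killing) vector fields of $g_{ij}$, i.e. $\mathcal{L}_{\eta_A}g_{ij}=\xi_{A,t}\,g_{ij}$ for $A=0,1$.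
   Context: Dot denotes total derivative with respect to $t$; $\partial_i=\partial/\partial x^i$; $\mathcal{L}_{\eta}$ denotes the Lie derivative along $\eta$. A vector field $Y$ is a homothetic vector field (HV) of $g_{ij}$ if $\mathcal{L}_Y g_{ij}=2\psi g_{ij}$ with $\psi$ constant (a Killing vector if $\psi=0$). A first-order approximate Noether point symmetry of $L=L_0+\varepsilon L_1$ (here $L_0=\frac12 g_{ij}\dot x^i\dot x^j-V_0$, $L_1=-V_1$) with generator $X=X_0+\varepsilon X_1$ is one for which there exist functions $f_A(t,x^k)$, $A=0,1$, such that \[ \left(X_0^{[1]}+\varepsilon X_1^{[1]}\right)(L_0+\varepsilon L_1)+(L_0+\varepsilon L_1)\frac{d}{dt}(\xi_0+\varepsilon\xi_1)-\frac{d}{dt}(f_0+\varepsilon f_1)=O(\varepsilon^2), \] where $X_A^{[1]}=\xi_A\partial_t+\eta_A^i\partial_i+(\dot\eta_A^i-\dot x^i\dot\xi_A)\partial_{\dot x^i}$ is the first prolongation and the condition is imposed identically in $t,x^k,\dot x^k$ at orders $\varepsilon^0$ and $\varepsilon^1$. *)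

From HB Require Import structures.
From mathcomp Require Import all_boot all_order all_algebra.
From mathcomp Require Import all_classical all_reals all_analysis.
Set Implicit Arguments. Unset Strict Implicit. Unset Printing Implicit Defensive.
Import Order.TTheory GRing.Theory Num.Theory.
Import numFieldNormedType.Exports.
Local Open Scope classical_set_scope.
Local Open Scope ring_scope.

Section Defs.
Variables (R : realType) (n : nat).
Local Notation E := 'rV[R]_n.

Definition ecoord (i : 'I_n) : E := delta_mx 0 i.

Definition dt {V : normedModType R} (F : R -> E -> V) (t : R) (x : E) : V :=
  derive (fun s => F s x) t 1.
Definition dx {V : normedModType R} (i : 'I_n) (F : R -> E -> V) (t : R) (x : E) : V :=
  derive (fun y => F t y) x (ecoord i).

(* total derivative d/dt of F(t,x) on jet space (t,x,xdot=v) *)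
Definition totd {V : normedModType R} (F : R -> E -> V) (t : R) (x v : E) : V :=
  dt F t x + \sum_(k < n) v 0 k *: dx k F t x.

Definition dLt (L : R -> E -> E -> R) t x v : R := derive (fun s => L s x v) t 1.
Definition dLx (L : R -> E -> E -> R) (i : 'I_n) t x v : R :=
  derive (fun y => L t y v) x (ecoord i).
Definition dLv (L : R -> E -> E -> R) (i : 'I_n) t x v : R :=
  derive (fun w => L t x w) v (ecoord i).

Definition prolong1 (xi : R -> E -> R) (eta : R -> E -> E) (L : R -> E -> E -> R)
  (t : R) (x v : E) : R :=
  xi t x * dLt L t x v
  + \sum_(i < n) eta t x 0 i * dLx L i t x v
  + \sum_(i < n) ((totd eta t x v) 0 i - v 0 i * totd xi t x v) * dLv L i t x v.

Definition Lag0 (g : E -> 'M[R]_n) (V0 : R -> E -> R) (t : R) (x v : E) : R :=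
  2^-1 * (\sum_(i < n) \sum_(j < n) g x i j * v 0 i * v 0 j) - V0 t x.
Definition Lag1 (V1 : R -> E -> R) (t : R) (x v : E) : R := - V1 t x.

Definition regular {V : normedModType R} (U : set E) (F : R -> E -> V) : Prop :=
  forall t x, U x -> derivable (fun s => F s x) t 1 /\ differentiable (fun y => F t y) x.

(* first-order approximate Noether point symmetry of L0 + eps L1 on R x U,
   with generator X0 + eps X1, X_A = xi_A d_t + eta_A^i d_i *)
Definition approx_noether (U : set E) (L0 L1 : R -> E -> E -> R)
  (xi0 xi1 : R -> E -> R) (eta0 eta1 : R -> E -> E) : Prop :=
  exists f0 f1 : R -> E -> R, regular U f0 /\ regular U f1 /\
   forall t x v, U x ->
     (* order eps^0 *)
     prolong1 xi0 eta0 L0 t x v + L0 t x v * totd xi0 t x v - totd f0 t x v = 0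
     (* order eps^1 *)
  /\ prolong1 xi1 eta1 L0 t x v + prolong1 xi0 eta0 L1 t x v
     + L1 t x v * totd xi0 t x v + L0 t x v * totd xi1 t x v - totd f1 t x v = 0.

Definition lie_metric (g : E -> 'M[R]_n) (Y : E -> E) (x : E) (i j : 'I_n) : R :=
  \sum_(k < n) (Y x 0 k * derive (fun y => g y i j) x (ecoord k)
               + g x k j * derive (fun y => Y y 0 k) x (ecoord i)
               + g x i k * derive (fun y => Y y 0 k) x (ecoord j)).

End Defs.

(* Fix t and x and scale the velocity, v := s v.  The gauge term D_t f, the
   potential terms and all contributions of L1 = -V1 are affine in s, whereas
   X^[1] L0 + L0 D_t xi is a cubic in s: its s^3-coefficient is
   -1/2 g(v,v) v^k d_k xi and its s^2-coefficient is 1/2 (L_eta g - xi_t g)(v,v).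
   So at each order in eps both coefficients vanish for every v.  As g is
   non-degenerate, g(v,v) is not identically zero, and the polynomial identity
   g(v,v) v^k d_k xi = 0 forces d_k xi = 0; a symmetric bilinear form vanishing
   on the diagonal is zero, which gives L_eta g = xi_t g. *)

From HB Require Import structures.
From mathcomp Require Import all_boot all_order all_algebra.
From mathcomp Require Import all_classical all_reals all_analysis.
From mathcomp Require Import ring lra.
Import Order.TTheory GRing.Theory Num.Theory.
Import numFieldNormedType.Exports.
Local Open Scope classical_set_scope.
Local Open Scope ring_scope.
Set Implicit Arguments. Unset Strict Implicit. Unset Printing Implicit Defensive.

Section QuadraticForms.
Variables (R : comPzRingType) (n : nat).
Implicit Types (M : 'I_n -> 'I_n -> R) (c : 'I_n -> R) (v w : 'rV[R]_n) (s : R).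
Local Notation e k := (delta_mx 0 k : 'rV[R]_n).

Definition qform M v : R := \sum_(i < n) \sum_(j < n) M i j * v 0 i * v 0 j.
Definition polar M v w : R :=
  \sum_(i < n) \sum_(j < n) M i j * (v 0 i * w 0 j + w 0 i * v 0 j).
Definition lform c v : R := \sum_(k < n) v 0 k * c k.

Lemma qformDZ M v w s :
  qform M (v + s *: w) = qform M v + s * polar M v w + s ^+ 2 * qform M w.
Proof.
rewrite /qform /polar mulr_sumr [s ^+ 2 * _]mulr_sumr -!big_split.
apply: eq_bigr => i _; rewrite mulr_sumr [s ^+ 2 * _]mulr_sumr -!big_split.
by apply: eq_bigr => j _; rewrite !mxE /=; ring.
Qed.

Lemma qformZ M v s : qform M (s *: v) = s ^+ 2 * qform M v.
Proof.
rewrite /qform mulr_sumr; apply: eq_bigr => i _; rewrite mulr_sumr.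
by apply: eq_bigr => j _; rewrite !mxE; ring.
Qed.

Lemma polarZl M v w s : polar M (s *: v) w = s * polar M v w.
Proof.
rewrite /polar mulr_sumr; apply: eq_bigr => i _; rewrite mulr_sumr.
by apply: eq_bigr => j _; rewrite !mxE; ring.
Qed.

Lemma lformDZ c v w s : lform c (v + s *: w) = lform c v + s * lform c w.
Proof.
by rewrite /lform mulr_sumr -big_split; apply: eq_bigr => k _; rewrite !mxE /=; ring.
Qed.

Lemma lformD c1 c2 v : lform (fun k => c1 k + c2 k) v = lform c1 v + lform c2 v.
Proof. by rewrite /lform -big_split; apply: eq_bigr => k _ /=; ring. Qed.

Lemma lform_delta c k : lform c (e k) = c k.
Proof.
rewrite /lform (bigD1 k) //= mxE !eqxx mul1r big1 ?addr0 // => j /negbTE jk.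
by rewrite mxE jk andbF mul0r.
Qed.

Lemma qform_outer (p q : 'I_n -> R) v :
  qform (fun i j => p i * q j) v = lform p v * lform q v.
Proof.
rewrite /qform /lform mulr_suml; apply: eq_bigr => i _; rewrite mulr_sumr.
by apply: eq_bigr => j _; ring.
Qed.

Lemma qform_sum (F : 'I_n -> 'I_n -> 'I_n -> R) v :
  qform (fun i j => \sum_(k < n) F k i j) v = \sum_(k < n) qform (F k) v.
Proof.
rewrite /qform [RHS]exchange_big; apply: eq_bigr => i _ /=.
rewrite [RHS]exchange_big; apply: eq_bigr => j _ /=.
by rewrite !mulr_suml.
Qed.

Lemma qformD M1 M2 v :
  qform (fun i j => M1 i j + M2 i j) v = qform M1 v + qform M2 v.
Proof.
rewrite /qform -big_split; apply: eq_bigr => i _ /=.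
by rewrite -big_split; apply: eq_bigr => j _ /=; ring.
Qed.

Lemma qformB M1 M2 v :
  qform (fun i j => M1 i j - M2 i j) v = qform M1 v - qform M2 v.
Proof.
rewrite /qform -sumrB; apply: eq_bigr => i _; rewrite -sumrB.
by apply: eq_bigr => j _; ring.
Qed.

Lemma qformMl r M v : qform (fun i j => r * M i j) v = r * qform M v.
Proof.
rewrite /qform mulr_sumr; apply: eq_bigr => i _; rewrite mulr_sumr.
by apply: eq_bigr => j _; ring.
Qed.

Lemma polar_lform M v w :
  polar M v w = lform (fun j => lform (M^~ j) v) w + lform (fun i => lform (M i) v) w.
Proof.
rewrite /polar /lform.
under [in X in _ = X + _]eq_bigr do rewrite mulr_sumr.
under [in X in _ = _ + X]eq_bigr do rewrite mulr_sumr.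
rewrite [X in _ = X + _]exchange_big -big_split; apply: eq_bigr => i _ /=.
by rewrite -big_split; apply: eq_bigr => j _ /=; ring.
Qed.

Lemma polar_delta M v k : polar M v (e k) = lform (M^~ k) v + lform (M k) v.
Proof. by rewrite polar_lform !lform_delta. Qed.

Lemma lform_polar_delta M v w : lform (fun k => polar M v (e k)) w = polar M v w.
Proof.
under [X in lform X]funext do rewrite polar_delta.
by rewrite lformD -polar_lform.
Qed.

Lemma polarxx M v : polar M v v = 2 * qform M v.
Proof.
rewrite /polar /qform mulr_sumr; apply: eq_bigr => i _; rewrite mulr_sumr.
by apply: eq_bigr => j _; ring.
Qed.

Lemma qform_lie (Y : 'I_n -> R) M (dM : 'I_n -> 'I_n -> 'I_n -> R)
    (dY : 'I_n -> 'I_n -> R) v :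
  qform (fun i j => \sum_(k < n) (Y k * dM k i j + M k j * dY i k + M i k * dY j k)) v
  = \sum_(k < n) Y k * qform (dM k) v
    + \sum_(k < n) lform (dY^~ k) v * polar M v (e k).
Proof.
rewrite qform_sum -big_split; apply: eq_bigr => k _ /=.
rewrite !qformD qformMl polar_delta mulrDr -addrA; congr (_ + _).
rewrite addrC qform_outer mulrC; congr (_ + _).
by rewrite -qform_outer; congr qform; apply/funext => i; apply/funext => j; rewrite mulrC.
Qed.

End QuadraticForms.

Lemma qform_sym_eq0 (R : numDomainType) (n : nat) (M : 'I_n -> 'I_n -> R) :
  (forall i j, M i j = M j i) -> (forall v, qform M v = 0) -> forall i j, M i j = 0.
Proof.
move=> Msym M0 i j; have := qformDZ M (delta_mx 0 i) (delta_mx 0 j) 1.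
rewrite !M0 polar_delta !lform_delta mul1r expr1n mulr0 add0r !addr0 (Msym j i).
by move/esym/eqP; rewrite -mulr2n mulrn_eq0 => /eqP.
Qed.

Lemma qform_neq0 (R : numDomainType) (n : nat) (M : 'M[R]_n) :
  (0 < n)%N -> M^T = M -> \det M != 0 -> exists v, qform M v != 0.
Proof.
move=> n_gt0 Msym detM; apply/not_existsP => qM0.
have M0 : M = 0.
  apply/matrixP => i j; rewrite mxE; apply: qform_sym_eq0 i j.
    by move=> i j; rewrite -[in LHS]Msym mxE.
  by move=> v; apply/eqP/negPn/negP; apply: qM0.
move: n_gt0 detM; rewrite M0; case: n {M Msym M0 qM0} => // n' _.
by rewrite det0 eqxx.
Qed.

Section RealForms.
Variables (R : realFieldType) (n : nat).

Lemma cubic_eq0_coefs (a0 a1 a2 a3 : R) :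
  (forall s, a0 + s * a1 + s ^+ 2 * a2 + s ^+ 3 * a3 = 0) -> a2 = 0 /\ a3 = 0.
Proof.
move=> P0; have := P0 0; have := P0 1; have := P0 (-1); have := P0 2.
rewrite !exprS !expr0; split; lra.
Qed.

Lemma qform_lform_mul_eq0 (M : 'I_n -> 'I_n -> R) (c : 'I_n -> R) :
  (exists w, qform M w != 0) -> (forall v, qform M v * lform c v = 0) ->
  forall k, c k = 0.
Proof.
move=> [w qw] Mc0 k; apply/eqP/negPn/negP => ck.
(* If c k <> 0 then lform c (w + s e_k) = s c_k, so the quadratic s |-> q (w + s e_k)
   vanishes at every s <> 0 although it equals q w <> 0 at s = 0. *)
have lw : lform c w = 0.
  by have /eqP := Mc0 w; rewrite mulf_eq0 (negbTE qw) => /eqP.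
have root s : s != 0 ->
    qform M w + s * polar M w (delta_mx 0 k) + s ^+ 2 * qform M (delta_mx 0 k) = 0.
  move=> s0; have /eqP := Mc0 (w + s *: delta_mx 0 k).
  rewrite qformDZ lformDZ lw lform_delta add0r !mulf_eq0 (negbTE s0) (negbTE ck).
  by rewrite !orbF => /eqP.
have := root 1; have := root (-1); have := root 2.
rewrite oppr_eq0 pnatr_eq0 !oner_eq0 !expr2 => /(_ isT) r2 /(_ isT) rm1 /(_ isT) r1.
have qw0 : qform M w = 0 by lra.
by rewrite qw0 eqxx in qw.
Qed.

End RealForms.

Section DirectionalDerivatives.
Context {R : numFieldType} {V W : normedModType R}.

Lemma derive_quadratic_ray (f : V -> W) a v c d :
  (forall h, h != 0 -> h^-1 *: (f (h *: v + a) - f a) = c + h *: d) ->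
  'D_v f a = c.
Proof.
move=> fq; apply: cvg_lim => //.
have cd : (fun h : R => c + h *: d) @ 0 --> c + 0 *: d.
  apply: (@cvgD _ _ _ (nbhs (0 : R))); first exact: cvg_cst.
  by apply: cvgZr_tmp; exact: cvg_id.
rewrite scale0r addr0 in cd.
have {}cd : (fun h : R => c + h *: d) @ (0 : R)^' --> c by exact: cvg_within_filter.
apply: cvg_trans cd; apply: near_eq_cvg; near=> h.
by rewrite /= fq //; near: h; exact: nbhs_dnbhs_neq.
Unshelve. all: by end_near.
Qed.

Lemma derive_addl_cst (f : V -> W) k a v : 'D_v (fun y => k + f y) a = 'D_v f a.
Proof.
rewrite /derive; do 2 f_equal; apply/funext => h /=.
by rewrite opprD addrACA subrr add0r.
Qed.

Lemma derive_mx_entry p q (f : V -> 'M[R]_(p, q)) a v i j :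
  derivable f a v -> 'D_v f a i j = 'D_v (fun y => f y i j) a.
Proof.
move=> df; apply/esym/cvg_lim => //.
have := cvg_comp _ _ df (@coord_continuous _ _ _ i j _).
by apply: cvg_trans; apply: near_eq_cvg; apply: nearW => h /=; rewrite !mxE.
Qed.

Lemma derive_sum_fun m (h : 'I_m -> V -> W) a v :
  (forall i, derivable (h i) a v) ->
  'D_v (fun y => \sum_(i < m) h i y) a = \sum_(i < m) 'D_v (h i) a.
Proof. by move=> dh; rewrite -derive_sum // fct_sumE. Qed.

Lemma derivable_sum_fun m (h : 'I_m -> V -> W) a v :
  (forall i, derivable (h i) a v) -> derivable (fun y => \sum_(i < m) h i y) a v.
Proof. by move=> dh; rewrite -fct_sumE; exact: derivable_sum. Qed.

End DirectionalDerivatives.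

Section QformDerivative.
Context {R : numFieldType} {V : normedModType R} (n : nat).

Variables (G : V -> 'M[R]_n) (w : 'rV[R]_n) (a u : V).
Hypothesis dG : forall i j, derivable (fun y => G y i j) a u.

Let dGw i j : derivable (fun y => G y i j * w 0 i * w 0 j) a u :=
  derivableM (derivableM (@dG i j) (derivable_cst _ _ _)) (derivable_cst _ _ _).

Lemma derivable_qform : derivable (fun y => qform (G y) w) a u.
Proof. by apply: derivable_sum_fun => i; apply: derivable_sum_fun => j; apply: dGw. Qed.

Lemma derive_qform :
  'D_u (fun y => qform (G y) w) a = qform (fun i j => 'D_u (fun y => G y i j) a) w.
Proof.
rewrite derive_sum_fun => [|i]; last by apply: derivable_sum_fun => j; apply: dGw.
apply: eq_bigr => i _; rewrite derive_sum_fun => [|j]; last exact: dGw.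
apply: eq_bigr => j _.
have -> : (fun y => G y i j * w 0 i * w 0 j) = (w 0 i * w 0 j) \o* (fun y => G y i j).
  by apply/funext => y; rewrite /= mulrA.
by rewrite deriveMr 1?mulrC ?mulrA //; exact: dG.
Qed.

End QformDerivative.

Section Lagrangian.
Variables (R : realType) (n : nat).
Local Notation E := 'rV[R]_n.
Implicit Types (g : E -> 'M[R]_n) (t s : R) (x v : E).

Lemma Lag0E g (V0 : R -> E -> R) t x v : Lag0 g V0 t x v = 2^-1 * qform (g x) v - V0 t x.
Proof. by []. Qed.

Lemma dLv_Lag0 g (V0 : R -> E -> R) t x v k :
  dLv (Lag0 g V0) k t x v = 2^-1 * polar (g x) v (ecoord R k).
Proof.
apply: (derive_quadratic_ray (d := 2^-1 * qform (g x) (ecoord R k))) => h h0.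
by rewrite !Lag0E [h *: _ + v]addrC qformDZ /GRing.scale /=; field.
Qed.

Lemma dLv_Lag1 (V1 : R -> E -> R) t x v k : dLv (Lag1 V1) k t x v = 0.
Proof. exact: derive_cst. Qed.

Lemma dLt_Lag0 g (V0 : R -> E -> R) t x v :
  dLt (Lag0 g V0) t x v = 'D_1 (fun s => - V0 s x) t.
Proof. exact: derive_addl_cst. Qed.

Lemma dLx_Lag0 g (V0 : R -> E -> R) t x v k :
    (forall i j, differentiable (fun y => g y i j) x) -> differentiable (V0 t) x ->
  dLx (Lag0 g V0) k t x v =
  2^-1 * qform (fun i j => 'D_(ecoord R k) (fun y => g y i j) x) v - dx k V0 t x.
Proof.
move=> dg dV; have dg' i j := diff_derivable (v := ecoord R k) (dg i j).
have dq := derivable_qform (w := v) dg'.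
rewrite /dLx deriveB /=; last exact: diff_derivable.
  by rewrite (deriveMl _ dq) derive_qform.
exact: derivableM (derivable_cst _ _ _) dq.
Qed.

Lemma totd_scale (F : R -> E -> R) t x v s :
  totd F t x (s *: v) = dt F t x + s * lform (fun k => dx k F t x) v.
Proof.
rewrite /totd /lform mulr_sumr; congr (_ + _); apply: eq_bigr => k _.
by rewrite mxE -scalerA.
Qed.

Lemma totd_scale_entry (F : R -> E -> E) t x v s i :
  totd F t x (s *: v) 0 i = dt F t x 0 i + s * lform (fun k => dx k F t x 0 i) v.
Proof.
rewrite /totd mxE summxE mulr_sumr; congr (_ + _); apply: eq_bigr => k _.
by rewrite !mxE mulrA.
Qed.

Lemma dx_entry (F : R -> E -> E) t x k i : differentiable (F t) x ->
  dx k F t x 0 i = 'D_(ecoord R k) (fun y => F t y 0 i) x.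
Proof. by move=> dF; rewrite /dx derive_mx_entry //; exact: diff_derivable. Qed.

(* X^[1] L + L D_t xi, the Noether condition without its gauge term D_t f. *)
Definition noether_expr (xi : R -> E -> R) (eta : R -> E -> E) (L : R -> E -> E -> R)
    t x v : R :=
  prolong1 xi eta L t x v + L t x v * totd xi t x v.

Definition ray_affine (F : E -> R) : Prop :=
  forall v, exists a0 a1, forall s, F (s *: v) = a0 + s * a1.

Lemma ray_affineB (F G : E -> R) :
  ray_affine F -> ray_affine G -> ray_affine (fun v => F v - G v).
Proof.
move=> affF affG v; have [a0 [a1 Fv]] := affF v; have [b0 [b1 Gv]] := affG v.
by exists (a0 - b0), (a1 - b1) => s; rewrite Fv Gv; ring.
Qed.

Lemma totd_ray_affine (F : R -> E -> R) t x : ray_affine (totd F t x).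
Proof.
by move=> v; exists (dt F t x), (lform (fun k => dx k F t x) v) => s; rewrite totd_scale.
Qed.

Lemma noether_expr_Lag0_cubic g (V0 xi : R -> E -> R) (eta : R -> E -> E) t x v :
    (forall i j, differentiable (fun y => g y i j) x) -> differentiable (V0 t) x ->
    differentiable (eta t) x ->
  exists a0 a1, forall s, noether_expr xi eta (Lag0 g V0) t x (s *: v) =
    a0 + s * a1
    + s ^+ 2 * (2^-1 * qform (fun i j => lie_metric g (eta t) x i j - dt xi t x * g x i j) v)
    - s ^+ 3 * (2^-1 * (qform (g x) v * lform (fun k => dx k xi t x) v)).
Proof.
move=> dg dV deta.
set q := qform (g x) v; set l := lform _ v; set tau := dt xi t x.
pose B i := polar (g x) v (ecoord R i).
pose A i := lform (fun k => dx k eta t x 0 i) v.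
pose Q i := qform (fun a b => 'D_(ecoord R i) (fun y => g y a b) x) v.
have lie : qform (lie_metric g (eta t) x) v = \sum_i eta t x 0 i * Q i + \sum_i A i * B i.
  rewrite /lie_metric qform_lie; congr (_ + _); apply: eq_bigr => i _; congr (_ * _).
  by rewrite /A; congr lform; apply/funext => k; rewrite dx_entry.
have vB : \sum_i v 0 i * B i = 2 * q by rewrite -polarxx -lform_polar_delta.
exists (xi t x * 'D_1 (fun r => - V0 r x) t - \sum_i eta t x 0 i * dx i V0 t x - V0 t x * tau).
exists (2^-1 * \sum_i dt eta t x 0 i * B i - V0 t x * l).
move=> s; rewrite /noether_expr /prolong1 dLt_Lag0 Lag0E qformZ totd_scale.
have -> : \sum_i eta t x 0 i * dLx (Lag0 g V0) i t x (s *: v) =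
    s ^+ 2 * (2^-1 * \sum_i eta t x 0 i * Q i) - \sum_i eta t x 0 i * dx i V0 t x.
  under eq_bigr do rewrite dLx_Lag0 // qformZ.
  by rewrite !mulr_sumr -sumrB; apply: eq_bigr => i _; rewrite /Q; ring.
have -> : \sum_i (totd eta t x (s *: v) 0 i - (s *: v) 0 i * (tau + s * l))
            * dLv (Lag0 g V0) i t x (s *: v) =
    s * (2^-1 * \sum_i dt eta t x 0 i * B i) + s ^+ 2 * (2^-1 * \sum_i A i * B i)
    - s ^+ 2 * tau * q - s ^+ 3 * l * q.
  under eq_bigr do rewrite dLv_Lag0 polarZl totd_scale_entry mxE.
  rewrite (eq_bigr (fun i => s * 2^-1 * (dt eta t x 0 i * B i)
      + s ^+ 2 * 2^-1 * (A i * B i) - s ^+ 2 * 2^-1 * tau * (v 0 i * B i)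
      - s ^+ 3 * 2^-1 * l * (v 0 i * B i))); last by move=> i _; rewrite /A /B; ring.
  by rewrite !sumrB !big_split /= -!mulr_sumr vB; field.
by rewrite qformB qformMl lie -/tau -/l -/q; field.
Qed.

Lemma noether_expr_Lag1_ray_affine (V1 xi : R -> E -> R) (eta : R -> E -> E) t x :
  ray_affine (noether_expr xi eta (Lag1 V1) t x).
Proof.
move=> v; exists (xi t x * 'D_1 (fun r => - V1 r x) t
        + \sum_i eta t x 0 i * 'D_(ecoord R i) (fun y => - V1 t y) x
        + - V1 t x * dt xi t x).
exists (- V1 t x * lform (fun k => dx k xi t x) v) => s.
rewrite /noether_expr /prolong1 totd_scale.
rewrite [X in _ + X + _ = _]big1 => [|i _]; last by rewrite dLv_Lag1 mulr0.
by rewrite addr0 mulrDr addrA mulrCA.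
Qed.

Lemma approx_noether_ray_affine (U : set E) g (V0 V1 xi0 xi1 : R -> E -> R)
    (eta0 eta1 : R -> E -> E) t x :
  approx_noether U (Lag0 g V0) (Lag1 V1) xi0 xi1 eta0 eta1 -> U x ->
  ray_affine (noether_expr xi0 eta0 (Lag0 g V0) t x) /\
  ray_affine (noether_expr xi1 eta1 (Lag0 g V0) t x).
Proof.
move=> [f0 [f1 [_ [_ noether]]]] Ux; split.
  have -> : noether_expr xi0 eta0 (Lag0 g V0) t x = totd f0 t x.
    by apply/funext => v; have [/eqP + _] := noether t x v Ux; rewrite subr_eq0 => /eqP.
  exact: totd_ray_affine.
have -> : noether_expr xi1 eta1 (Lag0 g V0) t x =
    (fun v => totd f1 t x v - noether_expr xi0 eta0 (Lag1 V1) t x v).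
  by apply/funext => v; have [_ order1] := noether t x v Ux; rewrite /noether_expr; lra.
exact: ray_affineB (totd_ray_affine _ _ _) (noether_expr_Lag1_ray_affine _ _ _ _ _).
Qed.

Lemma lie_metric_sym g (Y : E -> E) x i j : (\forall y \near x, (g y)^T = g y) ->
  lie_metric g Y x i j = lie_metric g Y x j i.
Proof.
move=> gsym; have gs y a b : (g y)^T = g y -> g y a b = g y b a.
  by move=> /matrixP/(_ b a); rewrite mxE.
have gxs a b := gs x a b (nbhs_singleton gsym).
rewrite /lie_metric; apply: eq_bigr => k _.
rewrite (near_eq_derive _ (_ : \forall y \near x, g y i j = g y j i)); last first.
  by apply: filterS gsym => y /gs.
by rewrite (gxs k j) (gxs i k); ring.
Qed.

Lemma homothetic_of_ray_affine g (V0 xi : R -> E -> R) (eta : R -> E -> E) t x :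
    (\forall y \near x, (g y)^T = g y) -> \det (g x) != 0 ->
    (forall i j, differentiable (fun y => g y i j) x) -> differentiable (V0 t) x ->
    differentiable (eta t) x -> ray_affine (noether_expr xi eta (Lag0 g V0) t x) ->
  (forall k, dx k xi t x = 0) /\
  (forall i j, lie_metric g (eta t) x i j = dt xi t x * g x i j).
Proof.
move=> gsym detg dg dV deta affine.
set M := fun i j => lie_metric g (eta t) x i j - dt xi t x * g x i j.
have coefs v : qform M v = 0 /\ qform (g x) v * lform (fun k => dx k xi t x) v = 0.
  have [a0 [a1 aff]] := affine v.
  have [b0 [b1 cub]] := noether_expr_Lag0_cubic xi v dg dV deta.
  have [] := cubic_eq0_coefs (a0 := b0 - a0) (a1 := b1 - a1) (a2 := 2^-1 * qform M v)
    (a3 := - (2^-1 * (qform (g x) v * lform (fun k => dx k xi t x) v))).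
    by move=> s; have := cub s; rewrite aff; lra.
  by split; lra.
split=> [k|i j].
  have n_gt0 := leq_ltn_trans (leq0n k) (ltn_ord k).
  apply: (qform_lform_mul_eq0 _ (fun v => (coefs v).2)).
  exact: qform_neq0 n_gt0 (nbhs_singleton gsym) detg.
apply/eqP; rewrite -subr_eq0; apply/eqP.
apply: (qform_sym_eq0 _ (fun v => (coefs v).1)) => a b.
have /matrixP/(_ b a) := nbhs_singleton gsym; rewrite mxE => gab.
by rewrite /M (lie_metric_sym _ _ _ gsym) gab.
Qed.

End Lagrangian.

Theorem theorem1 (R : realType) (n : nat) (U : set 'rV[R]_n)
  (g : 'rV[R]_n -> 'M[R]_n) (V0 V1 : R -> 'rV[R]_n -> R)
  (xi0 xi1 : R -> 'rV[R]_n -> R) (eta0 eta1 : R -> 'rV[R]_n -> 'rV[R]_n) :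
  open U ->
  (forall x, U x -> (g x)^T = g x) ->
  (forall x, U x -> \det (g x) != 0) ->
  (forall x i j, U x -> differentiable (fun y => g y i j) x) ->
  regular U V0 -> regular U V1 ->
  regular U xi0 -> regular U xi1 -> regular U eta0 -> regular U eta1 ->
  approx_noether U (Lag0 g V0) (Lag1 V1) xi0 xi1 eta0 eta1 ->
  (* xi_A = xi_A(t): no dependence on the x^k *)
  (forall t x (k : 'I_n), U x -> dx k xi0 t x = 0 /\ dx k xi1 t x = 0) /\
  (* eta_A(t,.) homothetic: L_{eta_A} g_ij = xi_{A,t} g_ij *)
  (forall t x (i j : 'I_n), U x ->
     lie_metric g (eta0 t) x i j = dt xi0 t x * g x i j /\
     lie_metric g (eta1 t) x i j = dt xi1 t x * g x i j).
Proof.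
move=> oU gsym detg dg rV0 _ _ _ reta0 reta1 noether.
have homothetic t x xi eta : U x -> differentiable (eta t) x ->
    ray_affine (noether_expr xi eta (Lag0 g V0) t x) ->
    (forall k, dx k xi t x = 0) /\
    (forall i j, lie_metric g (eta t) x i j = dt xi t x * g x i j).
  move=> Ux; have [_ dV0] := rV0 t x Ux.
  apply: homothetic_of_ray_affine (detg x Ux) (fun i j => dg x i j Ux) dV0.
  have Unear : \forall y \near x, U y by exact: oU.
  by apply: filterS Unear => y /gsym.
split=> [t x k Ux | t x i j Ux];
  have [aff0 aff1] := approx_noether_ray_affine t noether Ux;
  have [[_ deta0] [_ deta1]] := (reta0 t x Ux, reta1 t x Ux).
  by split; [exact: (homothetic _ _ _ _ Ux deta0 aff0).1 |
              exact: (homothetic _ _ _ _ Ux deta1 aff1).1].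
by split; [exact: (homothetic _ _ _ _ Ux deta0 aff0).2 |
           exact: (homothetic _ _ _ _ Ux deta1 aff1).2].
Qed.
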